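(* Let $\omega_1,\dots,\omega_n$ be positive reals with $\sum_{k\in[n]}\omega_k=1$ and $r_1,\dots,r_n$ positive reals. For each $k$ let $\theta_k=\arccos(\omega_k/2)$, so $\omega_k=e^{i\theta_k}+e^{-i\theta_k}$, and set $a_{k,j}=r_ke^{ij\theta_k}$ for $(k,j)\in[n]\times\{\pm1\}$. Then: (1) ${}^{\infty,0}\!\sum_{(k,j)}a_{k,j}=\max\{|r_k|:k\in[n]\}$; (2) ${}^{-\infty,0}\!\sum_{(k,j)}a_{k,j}=\min\{|r_k|:k\in[n]\}$; (3) ${}^{0,0}\!\sum_{(k,j)}a_{k,j}=\prod_{k\in[n]}r_k^{\omega_k}$; (4) for every real $\alpha\neq0$, ${}^{\alpha}\!\sum_{(k,j)}a_{k,j}=\big(\sum_{k\in[n]}\omega_kr_k^\alpha\big)^{1/\alpha}$.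
   Context: For $\alpha\in\mathbb{C}\setminus i\mathbb{R}$, $\epsilon_\alpha(0)=0$ and $\epsilon_\alpha(rs)=r^\alpha s$ for $r>0$, $|s|=1$; it is a bijection of $\mathbb{C}$. For a finite family $(a_t)$ in $\mathbb{C}$: ${}^{\alpha}\!\sum_t a_t:=\epsilon_\alpha^{-1}\big(\sum_t\epsilon_\alpha(a_t)\big)$; ${}^{\infty,0}\!\sum_ta_t:=\lim_{\alpha\to+\infty}{}^{\alpha}\!\sum_ta_t$ and ${}^{0,0}\!\sum_ta_t:=\lim_{\alpha\to0^+}{}^{\alpha}\!\sum_ta_t$ (limits over real $\alpha>0$); ${}^{-\infty,0}\!\sum_ta_t:=\lim_{\alpha\to-\infty}{}^{\alpha}\!\sum_ta_t$ (limit over real $\alpha<0$). *)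

From HB Require Import structures.
From mathcomp Require Import all_boot all_order all_algebra.
From mathcomp Require Import all_classical all_reals all_analysis.
From mathcomp Require Import complex.
Set Implicit Arguments. Unset Strict Implicit. Unset Printing Implicit Defensive.
Import Order.TTheory GRing.Theory Num.Theory ComplexField.
Import numFieldNormedType.Exports.
Local Open Scope classical_set_scope.
Local Open Scope ring_scope.
Local Open Scope complex_scope.

Section Defs.
Variable R : realType.

(* epsilon_alpha for real alpha: eps 0 = 0, and for z = r s with r = |z| > 0,
   |s| = 1 (so s = z / |z|), eps (r s) = r^alpha s. *)
Definition eps (alpha : R) (z : R[i]) : R[i] :=
  if z == 0 then 0
  else ((powR (Normc.normc z) alpha)%:C * (z / (Normc.normc z)%:C)).

(* the inverse map epsilon_alpha^{-1} (epsilon_alpha is a bijection of C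
   for alpha <> 0): the (unique) z with eps alpha z = w *)
Definition eps_inv (alpha : R) (w : R[i]) : R[i] :=
  xget 0 [set z | eps alpha z = w].

Definition alpha_sum (I : finType) (alpha : R) (a : I -> R[i]) : R[i] :=
  eps_inv alpha (\sum_(t : I) eps alpha (a t)).

Definition expi (x : R) : R[i] := (cos x) +i* (sin x).

(* min over k in [n] of f k (correct for n >= 1: the fold is seeded by the
   maximum, which is one of the values) *)
Definition min_over (n : nat) (f : 'I_n -> R) : R :=
  \big[Num.min/ \big[Num.max/0]_(k < n) f k]_(k < n) f k.

End Defs.

From HB Require Import structures.
From mathcomp Require Import all_boot all_order all_algebra.
From mathcomp Require Import all_classical all_reals all_analysis.
From mathcomp Require Import complex lra.
Import Order.TTheory GRing.Theory Num.Theory ComplexField.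
Import numFieldNormedType.Exports.
Local Open Scope classical_set_scope.
Local Open Scope ring_scope.
Local Open Scope complex_scope.

(* Since eps_alpha (r e^{i theta}) = r^alpha e^{i theta}, the two conjugate terms of
   index k add up to 2 cos(theta_k) r_k^alpha = w_k r_k^alpha, so the alpha-sum is the
   real power mean P(alpha)^{1/alpha} with P(alpha) = sum_k w_k r_k^alpha.  For the
   index k maximising alpha ln r_k, w_k r_k^alpha <= P(alpha) <= r_k^alpha, i.e.
   ln P(alpha) stays within -ln w_k of alpha ln r_k; dividing by alpha gives the limits
   at +oo and -oo.  At 0, P(0) = 1 and alpha^{-1} ln P(alpha) tends to the derivative
   (ln P)'(0) = sum_k w_k ln r_k. *)

Section Epsilon.
Context {R : realType}.
Implicit Types (alpha c s x : R) (z : R[i]).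

Lemma normc_real c : 0 <= c -> Normc.normc c%:C = c.
Proof. by move=> c0; rewrite /Normc.normc /= expr0n addr0 sqrtr_sqr ger0_norm. Qed.

Lemma normc_expi x : Normc.normc (expi x) = 1.
Proof. by rewrite /Normc.normc /expi cos2Dsin2 sqrtr1. Qed.

Lemma expi_neq0 x : expi x != 0.
Proof.
by apply: contra_neq (@oner_neq0 R) => ex0; rewrite -(normc_expi x) ex0 Normc.normc0.
Qed.

Lemma normc_ge0 z : 0 <= Normc.normc z.
Proof. by case: z => a b; exact: sqrtr_ge0. Qed.

Lemma real_complex_eq0 c : (c%:C == 0 :> R[i]) = (c == 0).
Proof. exact: (inj_eq (@complexI R)). Qed.

Lemma eps_polar alpha c x : 0 < c ->
  eps alpha (c%:C * expi x) = (c `^ alpha)%:C * expi x.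
Proof.
move=> c0; have cC0 : c%:C != 0 :> R[i] by rewrite real_complex_eq0 gt_eqF.
rewrite /eps Normc.normcM normc_real ?ltW // normc_expi mulr1.
by rewrite mulf_eq0 (negbTE cC0) (negbTE (expi_neq0 x)) [c%:C * _]mulrC mulfK.
Qed.

Lemma eps_real alpha c : 0 < c -> eps alpha c%:C = (c `^ alpha)%:C.
Proof. by move=> c0; have := eps_polar alpha c 0 c0; rewrite /expi cos0 sin0 !mulr1. Qed.

Lemma normc_eps alpha z : alpha != 0 ->
  Normc.normc (eps alpha z) = Normc.normc z `^ alpha.
Proof.
move=> a0; rewrite /eps; have [->|z0] := eqVneq z 0.
  by rewrite Normc.normc0 powR0.
have N0 : Normc.normc z != 0 by apply: contra_neq z0 => /Normc.eq0_normc.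
rewrite Normc.normcM normc_real ?powR_ge0 // Normc.normcM Normc.normcV.
by rewrite normc_real ?normc_ge0 // mulfV ?mulr1.
Qed.

Lemma eps_inj alpha : alpha != 0 -> injective (eps alpha).
Proof.
move=> a0 z z' e.
have Nzz : Normc.normc z = Normc.normc z'.
  have := congr1 (fun u => Normc.normc u `^ alpha^-1) e.
  by rewrite /= !normc_eps // -!powRrM mulfV // !powRr1 ?normc_ge0.
have [z0|z0] := eqVneq z 0.
  by rewrite z0 Normc.normc0 in Nzz; rewrite z0 (Normc.eq0_normc (esym Nzz)).
have z'0 : z' != 0.
  by apply: contra_neq z0 => z'0; apply: Normc.eq0_normc; rewrite Nzz z'0 Normc.normc0.
have N0 : Normc.normc z != 0 by apply: contra_neq z0 => /Normc.eq0_normc.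
move: e; rewrite /eps (negbTE z0) (negbTE z'0) -Nzz.
move=> /mulfI; rewrite real_complex_eq0 powR_eq0 (negbTE N0) => /(_ isT).
by apply: divIf; rewrite real_complex_eq0.
Qed.

Lemma epsK alpha : alpha != 0 -> cancel (eps alpha) (eps_inv alpha).
Proof. by move=> a0 z; apply: xget_unique => // z' /eps_inj ->. Qed.

Lemma eps_inv_real alpha s : alpha != 0 -> 0 < s ->
  eps_inv alpha s%:C = (s `^ alpha^-1)%:C.
Proof.
move=> a0 s0; rewrite -{1}[s](@powRr1 _ s) ?ltW // -(mulVf a0) powRrM.
by rewrite -eps_real ?powR_gt0 // epsK.
Qed.

Lemma expiD_expiN x : expi x + expi (- x) = (2 * cos x)%:C.
Proof.
by rewrite /expi cosN sinN; apply/eqP; rewrite eq_complex /= subrr mulr_natl mulr2n !eqxx.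
Qed.

Lemma sum_eps_conj_pairs {I : finType} (r theta : I -> R) alpha :
  (forall k, 0 < r k) ->
  \sum_(t : I * bool) eps alpha ((r t.1)%:C * expi ((if t.2 then 1 else -1) * theta t.1))
  = (\sum_k 2 * cos (theta k) * r k `^ alpha)%:C.
Proof.
move=> r_gt0; rewrite rmorph_sum -(pair_bigA _ (fun k j =>
  eps alpha ((r k)%:C * expi ((if j then 1 else -1) * theta k)))).
apply: eq_bigr => k _; rewrite big_bool /= !eps_polar // mul1r mulN1r.
by rewrite -mulrDr expiD_expiN -rmorphM mulrC.
Qed.
End Epsilon.

Section RealAnalysis.
Context {R : realType}.

Lemma cvg_real_complex {T : Type} {F : set_system T} {FF : Filter F} (f : T -> R) (l : R) :
  f @ F --> l ->
  ((fun x => (f x)%:C) : T -> (R[i] : numClosedFieldType)) @ F -->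
  (l%:C : (R[i] : numClosedFieldType)).
Proof.
move=> fl; apply/cvgrPdist_lt => e e0.
move: (e0); rewrite ltcE /= => /andP[/eqP Ime Ree0].
have -> : e = (complex.Re e)%:C by case: e {e0 Ree0} Ime => a b /= ->.
move/cvgrPdist_lt: fl => /(_ _ Ree0); apply: filterS => x.
by rewrite -rmorphB normc_def /= expr0n addr0 sqrtr_sqr ltcR.
Qed.

Lemma cvgy_invM (f : R -> R) (L c : R) :
  (forall a, 0 < a -> `|f a - a * L| <= c) -> a^-1 * f a @[a --> +oo] --> L.
Proof.
move=> fL; apply/cvgrPdist_lt => e e0; near=> a.
have a0 : 0 < a by near: a; apply: nbhs_pinfty_gt; rewrite num_real.
have ca : c / e < a by near: a; apply: nbhs_pinfty_gt; rewrite num_real.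
rewrite distrC -[L](mulKf (lt0r_neq0 a0)) -mulrBr normrM gtr0_norm ?invr_gt0 //.
rewrite ltr_pdivrMl // (le_lt_trans (fL a a0)) // -ltr_pdivrMr //.
Unshelve. all: by end_near. Qed.

Lemma cvgNy_invM (f : R -> R) (L c : R) :
  (forall a, a < 0 -> `|f a - a * L| <= c) -> a^-1 * f a @[a --> -oo] --> L.
Proof.
move=> fL; apply/cvgNy_compNP.
have -> : (fun a => a^-1 * f a) \o -%R = (fun a => a^-1 * - f (- a)).
  by apply/funext => a /=; rewrite invrN mulNr mulrN.
apply: (@cvgy_invM _ _ c) => a a0.
by rewrite -normrN opprD opprK -mulNr fL // oppr_lt0.
Qed.

Lemma is_derive1_powRr (a x : R) : 0 < a -> is_derive x 1 (powR a) (ln a * a `^ x).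
Proof.
move=> a0; have -> : powR a = expR \o ( *%R (ln a)).
  by apply/funext => y; rewrite /powR gt_eqF // mulrC.
rewrite [ln a * _]mulrC; apply: is_derive1_comp.
by rewrite -[X in is_derive _ _ _ X]mulr1; apply: is_deriveZ.
Qed.

Lemma cvg_derive_quotient {f : R -> R} {x l : R} : is_derive x 1 f l ->
  h^-1 * (f (h + x) - f x) @[h --> 0^'] --> l.
Proof.
move=> fl; have : (fun h => h^-1 *: ((f \o shift x) (h *: 1) - f x)) @ 0^'
    --> 'D_1 f x := @ex_derive _ _ _ _ _ _ _ fl.
by rewrite derive_val; under eq_fun do rewrite /= scaler1.
Qed.
End RealAnalysis.

Section PowerMean.
Context {R : realType} {I : finType} (w r : I -> R).
Hypotheses (w_gt0 : forall k, 0 < w k) (sum_w : \sum_k w k = 1)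
  (r_gt0 : forall k, 0 < r k).

Definition power_sum (a : R) : R := \sum_k w k * r k `^ a.

Lemma weight_le1 k : w k <= 1.
Proof. by rewrite -sum_w (bigD1 k) //= lerDl sumr_ge0 // => i _; exact: ltW. Qed.

Lemma power_sum_ge_term a k : w k * r k `^ a <= power_sum a.
Proof.
rewrite /power_sum (bigD1 k) //= lerDl sumr_ge0 // => i _.
by rewrite mulr_ge0 ?powR_ge0 ?ltW.
Qed.

Lemma exists_weight_gt0 : exists k, 0 < w k.
Proof.
have [k /andP[_ wk]] : exists k, true && (0 < w k).
  by apply: psumr_neq0P => [k _|]; [exact: ltW | rewrite sum_w; exact/eqP/oner_neq0].
by exists k.
Qed.

Lemma power_sum_gt0 a : 0 < power_sum a.
Proof.
have [k _] := exists_weight_gt0.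
by apply: lt_le_trans (power_sum_ge_term a k); rewrite mulr_gt0 ?powR_gt0.
Qed.

Lemma power_sum_le_max a k : (forall k', r k' `^ a <= r k `^ a) ->
  power_sum a <= r k `^ a.
Proof.
move=> rk; rewrite -[leRHS]mul1r -sum_w mulr_suml.
by apply: ler_sum => i _; rewrite ler_pM2l.
Qed.

Lemma ln_power_sum_near_max a k : (forall k', r k' `^ a <= r k `^ a) ->
  `|ln (power_sum a) - a * ln (r k)| <= - ln (w k).
Proof.
move=> rk; have P0 := power_sum_gt0 a; have rka0 : 0 < r k `^ a by rewrite powR_gt0.
rewrite -ln_powR ler_norml; apply/andP; split.
  rewrite opprK lerBrDr -lnM ?posrE ?w_gt0 // ler_ln ?posrE ?mulr_gt0 //.
  exact: power_sum_ge_term.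
apply: (@le_trans _ _ 0).
  by rewrite subr_le0 ler_ln ?posrE // power_sum_le_max.
by rewrite oppr_ge0 ln_le0 // weight_le1.
Qed.

Lemma cvgy_ln_power_sum k : (forall k', r k' <= r k) ->
  a^-1 * ln (power_sum a) @[a --> +oo] --> ln (r k).
Proof.
move=> rk; apply: (@cvgy_invM _ _ _ (- ln (w k))) => a a0.
apply: ln_power_sum_near_max => k'.
by rewrite /powR !gt_eqF // ler_expR ler_pM2l // ler_ln ?posrE.
Qed.

Lemma cvgNy_ln_power_sum k : (forall k', r k <= r k') ->
  a^-1 * ln (power_sum a) @[a --> -oo] --> ln (r k).
Proof.
move=> rk; apply: (@cvgNy_invM _ _ _ (- ln (w k))) => a a0.
apply: ln_power_sum_near_max => k'.
by rewrite /powR !gt_eqF // ler_expR ler_nM2l // ler_ln ?posrE.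
Qed.

Lemma is_derive_power_sum : is_derive (0 : R) 1 power_sum (\sum_k w k * ln (r k)).
Proof.
have -> : power_sum = \sum_k (fun a => w k * r k `^ a).
  by apply/funext => a; rewrite fct_sumE.
elim/big_ind2: _ => [|f df g dg|k _]; first exact: is_derive_cst.
  exact: is_deriveD.
have := is_derive1_powRr (r k) 0 (r_gt0 k); rewrite powRr0 mulr1; exact: is_deriveZ.
Qed.

Lemma cvg0_ln_power_sum :
  a^-1 * ln (power_sum a) @[a --> 0^'] --> \sum_k w k * ln (r k).
Proof.
have P0 : power_sum 0 = 1 by rewrite -sum_w; apply: eq_bigr => k _; rewrite powRr0 mulr1.
have := cvg_derive_quotient
  (is_derive1_comp (is_derive1_ln (power_sum_gt0 0)) is_derive_power_sum).
rewrite P0 invr1 mul1r /= P0 ln1.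
by under eq_fun do rewrite addr0 subr0.
Qed.

Local Notation conj_pairs := (fun t : I * bool =>
  (r t.1)%:C * expi ((if t.2 then 1 else -1) * acos (w t.1 / 2))).

Lemma alpha_sum_conj_pairs alpha : alpha != 0 ->
  alpha_sum alpha conj_pairs = (power_sum alpha `^ alpha^-1)%:C.
Proof.
move=> a0; rewrite /alpha_sum (sum_eps_conj_pairs r (fun k => acos (w k / 2))) //.
have -> : \sum_k 2 * cos (acos (w k / 2)) * r k `^ alpha = power_sum alpha.
  apply: eq_bigr => k _; rewrite acosK ?[2 * _]mulrC ?divfK // in_itv /=.
  by have := weight_le1 k; have := w_gt0 k; lra.
by rewrite eps_inv_real ?power_sum_gt0.
Qed.

Lemma cvg_alpha_sum_conj_pairs (F : set_system R) {FF : Filter F} (L : R) :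
  (\forall a \near F, a != 0) -> a^-1 * ln (power_sum a) @[a --> F] --> L ->
  (alpha_sum a conj_pairs : (R[i] : numClosedFieldType)) @[a --> F] -->
  ((expR L)%:C : (R[i] : numClosedFieldType)).
Proof.
move=> F0 lnL; apply: cvg_trans; last first.
  exact: cvg_real_complex (cvg_comp _ _ lnL (@continuous_expR R L)).
apply: near_eq_cvg; apply: filterS F0 => a a0.
by rewrite /= alpha_sum_conj_pairs // /powR gt_eqF ?power_sum_gt0 // mulrC.
Qed.
End PowerMean.

Theorem proposition10p1 (R : realType) (n : nat) (w r : 'I_n -> R)
  (hw : forall k, 0 < w k) (hsum : \sum_(k < n) w k = 1)
  (hr : forall k, 0 < r k) :
  let theta := fun k : 'I_n => acos (w k / 2) in
  let a := fun t : 'I_n * bool =>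
    (r t.1)%:C * expi ((if t.2 then 1 else -1) * theta t.1) in
  let S := fun alpha : R => (alpha_sum alpha a : (R[i] : numClosedFieldType)) in
  [/\ S @ +oo --> ((\big[Num.max/0]_(k < n) `|r k|)%:C : (R[i] : numClosedFieldType)),
      S @ -oo --> ((min_over (fun k => `|r k|))%:C : (R[i] : numClosedFieldType)),
      S @ 0^'+ --> ((\prod_(k < n) powR (r k) (w k))%:C : (R[i] : numClosedFieldType))
    & forall alpha : R, alpha != 0 ->
      alpha_sum alpha a = (powR (\sum_(k < n) w k * powR (r k) alpha) alpha^-1)%:C].
Proof.
move=> theta a S; rewrite {}/S {}/a {}/theta.
have [k0 _] := exists_weight_gt0 _ hw hsum.
have normr_r k : `|r k| = r k by rewrite gtr0_norm.
have [kmax _ Emax] := eq_bigmax (x := 0) k0 xpredT (fun k => `|r k|) isT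
  (fun k _ => normr_ge0 (r k)).
have [kmin _ Emin] := eq_bigmin k0 xpredT (fun k => `|r k|) isT
  (fun k _ => le_bigmax 0 (fun k => `|r k|) k).
have r_le_max k : r k <= r kmax.
  by have := le_bigmax 0 (fun k => `|r k|) k; rewrite Emax !normr_r.
have r_ge_min k : r kmin <= r k.
  have := bigmin_le (\big[Num.max/0]_(k < n) `|r k|) k (fun k => `|r k|).
  by rewrite Emin !normr_r.
rewrite /min_over Emin Emax !normr_r -(lnK (hr kmax)) -(lnK (hr kmin)).
have -> : \prod_(k < n) r k `^ w k = expR (\sum_(k < n) w k * ln (r k)).
  by rewrite expR_sum; apply: eq_bigr => k _; rewrite /powR gt_eqF // mulrC.
have cvg_S := cvg_alpha_sum_conj_pairs _ _ hw hsum hr.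
split; last exact: alpha_sum_conj_pairs.
- apply: cvg_S; last exact: cvgy_ln_power_sum.
  exact: filterS (fun x => @lt0r_neq0 _ x) (nbhs_pinfty_gt (num_real 0)).
- apply: cvg_S; last exact: cvgNy_ln_power_sum.
  exact: filterS (fun x => @ltr0_neq0 _ x) (nbhs_ninfty_lt (num_real 0)).
- apply: cvg_S; last exact/cvg_dnbhs_at_right/cvg0_ln_power_sum.
  exact: filterS (fun x => @lt0r_neq0 _ x) (nbhs_right_gt 0).
Qed.
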